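(* The map $R:\mathbb{CP}^2\dashrightarrow\mathbb{CP}^2$ is algebraically stable.
   Context: $R[U:V:W]=[(U^2+V^2)^2:V^2(U+W)^2:(V^2+W^2)^2]$, a rational map of $\mathbb{CP}^2$ with indeterminacy points $[\pm i:1:\mp i]$. A rational map $R:\mathbb{CP}^2\dashrightarrow\mathbb{CP}^2$ is algebraically stable if there is no integer $n\ge0$ and no algebraic curve $V$ collapsed by $R$ (to a point) such that $R^n(V)$ is contained in the indeterminacy set of $R$; equivalently $\deg R^n=(\deg R)^n$ for all $n$, where $\deg$ is the degree of the reduced homogeneous lift. *)

From HB Require Import structures.
From mathcomp Require Import all_boot all_order all_algebra.
From mathcomp Require Import mpoly.

Set Implicit Arguments.
Unset Strict Implicit.
Unset Printing Implicit Defensive.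

Import Order.TTheory GRing.Theory Num.Theory.
Local Open Scope ring_scope.

Section RationalMap.
Variable C : numClosedFieldType.

(* homogeneous coordinates [U:V:W] = [X_0 : X_1 : X_2] on P^2(C) *)
Notation P := {mpoly C[3]}.
Definition U : P := 'X_(@Ordinal 3 0 isT).
Definition V : P := 'X_(@Ordinal 3 1 isT).
Definition W : P := 'X_(@Ordinal 3 2 isT).

Definition Rlift : 3.-tuple P :=
  [tuple (U ^+ 2 + V ^+ 2) ^+ 2; V ^+ 2 * (U + W) ^+ 2; (V ^+ 2 + W ^+ 2) ^+ 2].

Fixpoint Riter_lift (n : nat) : 3.-tuple P :=
  match n with
  | 0 => [tuple U; V; W]
  | k.+1 => [tuple of map (fun p => p \mPo Riter_lift k) Rlift]
  end.

(* G is a homogeneous lift of degree d of the rational map R^n: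
   G = (G_0,G_1,G_2) not all zero, each G_i homogeneous of degree d,
   and G defines the same rational map as the composite lift,
   i.e. G is proportional to Riter_lift n. *)
Definition is_lift_iter (n d : nat) (G : 3.-tuple P) : Prop :=
  [/\ exists i, tnth G i != 0,
      forall i, tnth G i \is d.-homog &
      forall i j, tnth G i * tnth (Riter_lift n) j
                  = tnth G j * tnth (Riter_lift n) i].

(* reduced: the components have no non-constant common factor *)
Definition reduced (G : 3.-tuple P) : Prop :=
  forall h : P, (forall i, exists q : P, tnth G i = h * q) -> (msize h <= 1)%N.

(* "deg R^n = d": d is the degree of a reduced homogeneous lift of R^n *)
Definition deg_iter_is (n d : nat) : Prop :=
  exists G, is_lift_iter n d G /\ reduced G.

End RationalMap.

(* Let F = (F_0, F_1, F_2) be the n-fold composite of the lift of R. Each F_i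
   is homogeneous of degree 4^n, and on the line {V = 0} the triple F restricts
   to (U^(4^n), 0, W^(4^n)). Since U^N and W^N are coprime, restricting a
   relation g F_2 = h F_0 to {V = 0} lets one split off a common multiple of
   (F_0, F_2) and divide the remainder by V; descending on the size of (g, h)
   shows that every such relation is (g, h) = q (F_0, F_2). Hence every lift of
   R^n is q F, reducedness forces q to be constant, and F itself is reduced:
   deg R^n = 4^n. *)
From HB Require Import structures.
From mathcomp Require Import all_boot all_order all_algebra.
From mathcomp Require Import mpoly.
From mathcomp Require Import ring zify.

Set Implicit Arguments. Unset Strict Implicit. Unset Printing Implicit Defensive.
Import GRing.Theory.
Local Open Scope ring_scope.

Section Restriction.
Variables (R : idomainType) (n : nat) (i : 'I_n).
Local Notation P := {mpoly R[n]}.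

Definition msubst0 : P -> P :=
  comp_mpoly [tuple (if j == i then 0 else 'X_j) | j < n].
HB.instance Definition _ := GRing.LRMorphism.on msubst0.

Lemma msubst0X m : msubst0 'X_[m] = if m i == 0%N then 'X_[m] else 0.
Proof.
rewrite /msubst0 comp_mpolyX; case: eqP => hm.
  rewrite [RHS]mpolyXE_id; apply: eq_bigr => j _; rewrite tnth_mktuple.
  by case: eqP => [->|//]; rewrite hm !expr0.
rewrite (bigD1 i) //= tnth_mktuple eqxx expr0n.
by move/eqP/negbTE: hm => ->; rewrite mul0r.
Qed.

Lemma msubst0Xi j : msubst0 'X_j = if j == i then 0 else 'X_j.
Proof. by rewrite msubst0X mnm1E; case: (j == i). Qed.

Lemma msubst0E p :
  msubst0 p = \sum_(m <- msupp p) p@_m *: (if m i == 0%N then 'X_[m] else 0).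
Proof.
rewrite {1}[p]mpolyE linear_sum; apply: eq_bigr => m _ /=.
by rewrite linearZ /= msubst0X.
Qed.

Lemma msubst0_id p : msubst0 (msubst0 p) = msubst0 p.
Proof.
rewrite (msubst0E p) linear_sum; apply: eq_bigr => m _ /=.
by rewrite linearZ /=; case: eqP => hm; rewrite ?raddf0 // msubst0X hm.
Qed.

Lemma msize_msubst0 p : (msize (msubst0 p) <= msize p)%N.
Proof.
rewrite msubst0E; apply: (leq_trans (msize_sum _ _ _)).
apply/bigmax_leqP_seq => m mp _; apply: (leq_trans (msizeZ_le _ _)).
case: eqP => _; last by rewrite msize0.
by rewrite msizeX; apply: msize_mdeg_lt.
Qed.

Lemma mpolyX_factorX (m : 'X_{1..n}) :
  m i != 0%N -> 'X_[m] = 'X_i * 'X_[(m - U_(i))%MM] :> P.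
Proof.
move=> hm; rewrite -mpolyXD; congr 'X_[_]; apply/mnmP => j.
rewrite mnmDE mnmBE mnm1E; case: eqP => [<-|_]; last by rewrite subn0.
by rewrite add1n subn1 prednK // lt0n.
Qed.

Lemma msubst0_decomp p : exists r, p = msubst0 p + 'X_i * r.
Proof.
exists (\sum_(m <- msupp p)
          p@_m *: (if m i == 0%N then 0 else 'X_[(m - U_(i))%MM])).
rewrite msubst0E mulr_sumr -big_split /= {1}[p]mpolyE; apply: eq_bigr => m _ /=.
rewrite -scalerAr -scalerDr; congr (_ *: _); case: eqP => hm.
  by rewrite mulr0 addr0.
by rewrite add0r mpolyX_factorX //; apply/eqP.
Qed.

Lemma msubst0_eq0 p : msubst0 p = 0 -> exists r, p = 'X_i * r.
Proof. by move=> h; have [r hr] := msubst0_decomp p; exists r; rewrite hr h add0r. Qed.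

End Restriction.

Section CoprimePair.
Variables (R : idomainType) (n : nat).
Local Notation P := {mpoly R[n]}.

Lemma mpolyXi_neq0 (j : 'I_n) : 'X_j != 0 :> P.
Proof. by rewrite -msize_poly_eq0 msizeX. Qed.

Lemma msizeXn (j : 'I_n) k : msize ('X_j ^+ k : P) = k.+1.
Proof. by rewrite mpolyXn msizeX mdegMn mdeg1 mul1n. Qed.

Lemma msize_dhomog (p : P) N : p \is N.-homog -> (msize p <= N.+1)%N.
Proof.
have [->|pn0] := eqVneq p 0; first by rewrite msize0.
move=> hp; have := dhomog_uniq pn0 hp (dhomog_msize hp).
have : msize p != 0%N by rewrite msize_poly_eq0.
by case: (msize p) => [|m] //= _ ->.
Qed.

Lemma mpolyXn_cross (j k : 'I_n) (x y : P) N : j != k ->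
  x * 'X_k ^+ N = y * 'X_j ^+ N -> exists h, x = 'X_j ^+ N * h /\ y = 'X_k ^+ N * h.
Proof.
move=> jk e.
have Xn_neq0 (l : 'I_n) a : 'X_l ^+ a != 0 :> P by rewrite expf_neq0 ?mpolyXi_neq0.
suff [h hy] : exists h, y = 'X_k ^+ N * h.
  exists h; split=> //; apply: (mulIf (Xn_neq0 k N)).
  by rewrite e hy; ring.
suff Xk_dvd_y a : (a <= N)%N -> exists h, y = 'X_k ^+ a * h by exact: Xk_dvd_y.
elim: a => [|a IH] ha; first by exists y; rewrite expr0 mul1r.
have [h hh] := IH (ltnW ha).
have e' : x * 'X_k ^+ (N - a) = h * 'X_j ^+ N.
  apply: (mulfI (Xn_neq0 k a)); rewrite mulrCA -exprD subnKC ?(ltnW ha) //.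
  by rewrite e hh mulrA.
(* setting X_k = 0 kills the left-hand side, since N - a > 0 *)
have /msubst0_eq0 [r hr] : msubst0 k h = 0.
  have := congr1 (msubst0 k) e'; rewrite !rmorphM !rmorphXn /= !msubst0Xi eqxx.
  rewrite (negbTE jk) expr0n subn_eq0 leqNgt ha mulr0 => /esym/eqP.
  by rewrite mulf_eq0 (negbTE (Xn_neq0 j N)) orbF => /eqP.
by exists r; rewrite hh hr exprSr mulrA.
Qed.

Lemma msize_descent (i : 'I_n) (A Y g q r : P) N :
  Y != 0 -> msize Y = N.+1 -> (msize A <= N.+1)%N ->
  msubst0 i g = Y * q -> g - q * A = 'X_i * r ->
  (msize r + (g != 0%R) <= msize g)%N.
Proof.
move=> Y_neq0 sY sA hg hr.
have [g0|g_neq0] := eqVneq g 0.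
  move: hg; rewrite g0 raddf0 => /esym/eqP; rewrite mulf_eq0 (negbTE Y_neq0) /=.
  move=> /eqP q0; move: hr; rewrite g0 q0 mul0r subr0 => /esym/eqP.
  by rewrite mulf_eq0 (negbTE (mpolyXi_neq0 _)) /= => /eqP ->; rewrite msize0.
have [->|r_neq0] := eqVneq r 0; first by rewrite msize0 add0n lt0n msize_poly_eq0.
have -> : (msize r + 1 = msize ('X_i * r))%N.
  by rewrite msizeM ?mpolyXi_neq0 // msizeX mdeg1 addn1.
rewrite -hr; apply: (leq_trans (msizeD_le _ _)); rewrite geq_max leqnn msizeN /=.
have [->|q_neq0] := eqVneq q 0; first by rewrite mul0r msize0.
have [->|A_neq0] := eqVneq A 0; first by rewrite mulr0 msize0.
have := msize_msubst0 i g; rewrite hg !msizeM // sY; apply: leq_trans.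
have : msize A != 0%N by rewrite msize_poly_eq0.
have : msize q != 0%N by rewrite msize_poly_eq0.
lia.
Qed.

Definition coprime_pair (A B : P) : Prop :=
  forall g h : P, g * B = h * A -> exists q, g = q * A /\ h = q * B.

Lemma coprime_pair_restrictX (i j k : 'I_n) (A B : P) N :
  j != i -> k != i -> j != k ->
  msubst0 i A = 'X_j ^+ N -> msubst0 i B = 'X_k ^+ N ->
  (msize A <= N.+1)%N -> (msize B <= N.+1)%N -> coprime_pair A B.
Proof.
move=> ji ki jk rA rB sA sB g h.
have Xn_neq0 (l : 'I_n) : 'X_l ^+ N != 0 :> P by rewrite expf_neq0 ?mpolyXi_neq0.
have msubst0Xn (l : 'I_n) : l != i -> msubst0 i ('X_l ^+ N) = 'X_l ^+ N.
  by move=> li; rewrite rmorphXn /= msubst0Xi (negbTE li).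
move: {2}(msize g + msize h)%N (leqnn (msize g + msize h)) => s.
elim: s g h => [|s IH] g h.
  move=> hs _; exists 0; rewrite !mul0r; split; apply/eqP; rewrite -msize_poly_eq0; lia.
move=> hs e.
(* on X_i = 0 the relation reads g X_k^N = h X_j^N, which yields the cofactor q0;
   g - q0 A and h - q0 B then vanish on X_i = 0 and are divisible by X_i *)
have := congr1 (msubst0 i) e; rewrite !rmorphM /= rA rB => /mpolyXn_cross.
move=> /(_ jk) [c [gc hc]]; set q0 := msubst0 i c.
have rg : msubst0 i g = 'X_j ^+ N * q0.
  by rewrite -msubst0_id gc rmorphM /= msubst0Xn.
have rh : msubst0 i h = 'X_k ^+ N * q0.
  by rewrite -msubst0_id hc rmorphM /= msubst0Xn.
have [g' hg'] : exists g', g - q0 * A = 'X_i * g'.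
  by apply: msubst0_eq0; rewrite rmorphB rmorphM /= msubst0_id rA rg mulrC subrr.
have [h' hh'] : exists h', h - q0 * B = 'X_i * h'.
  by apply: msubst0_eq0; rewrite rmorphB rmorphM /= msubst0_id rB rh mulrC subrr.
have dg := msize_descent (Xn_neq0 j) (msizeXn _ _) sA rg hg'.
have dh := msize_descent (Xn_neq0 k) (msizeXn _ _) sB rh hh'.
have e' : g' * B = h' * A.
  apply: (mulfI (mpolyXi_neq0 i)); rewrite !mulrA -hg' -hh'.
  by rewrite !mulrBl e mulrAC.
have [/andP [/eqP -> /eqP ->]|gh_neq0] := boolP ((g == 0) && (h == 0)).
  by exists 0; rewrite !mul0r.
have [q' [hq'g hq'h]] : exists q', g' = q' * A /\ h' = q' * B.
  apply: IH e'; move: gh_neq0 dg dh hs.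
  by case: (g == 0); case: (h == 0) => //= _; lia.
exists (q0 + 'X_i * q'); split.
  by move/eqP: hg'; rewrite subr_eq => /eqP ->; rewrite hq'g; ring.
by move/eqP: hh'; rewrite subr_eq => /eqP ->; rewrite hq'h; ring.
Qed.

End CoprimePair.

Section AlgebraicStability.
Variable C : numClosedFieldType.
Local Notation P := {mpoly C[3]}.
Local Notation F k := (Riter_lift C k).
Local Notation i0 := (@Ordinal 3 0 isT).
Local Notation i1 := (@Ordinal 3 1 isT).
Local Notation i2 := (@Ordinal 3 2 isT).

Lemma ord3P (j : 'I_3) : [\/ j = i0, j = i1 | j = i2].
Proof.
by case: j => [[|[|[|m]]] hj] //; [apply: Or31|apply: Or32|apply: Or33]; apply: val_inj.
Qed.

Lemma Riter_liftS k :
  [/\ tnth (F k.+1) i0 = (tnth (F k) i0 ^+ 2 + tnth (F k) i1 ^+ 2) ^+ 2,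
      tnth (F k.+1) i1 = tnth (F k) i1 ^+ 2 * (tnth (F k) i0 + tnth (F k) i2) ^+ 2 &
      tnth (F k.+1) i2 = (tnth (F k) i1 ^+ 2 + tnth (F k) i2 ^+ 2) ^+ 2].
Proof.
rewrite /= !tnth_map /= !(rmorphXn, rmorphD, rmorphM) /=.
by rewrite /U /V /W !comp_mpolyXU -!tnth_nth.
Qed.

Lemma Riter_lift_homog k j : tnth (F k) j \is (4 ^ k)%N.-homog.
Proof.
elim: k j => [|k IH] j.
  by case: (ord3P j) => ->; rewrite /= /U /V /W dhomogX /= mdeg1.
have [E0 E1 E2] := Riter_liftS k.
have e4 : (4 ^ k.+1 = 4 ^ k * 2 * 2)%N by rewrite expnS; lia.
case: (ord3P j) => ->.
- by rewrite E0 e4; apply: dhomogMn; apply: dhomogD; apply: dhomogMn.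
- have -> : (4 ^ k.+1 = 4 ^ k * 2 + 4 ^ k * 2)%N by rewrite expnS; lia.
  by rewrite E1; apply: dhomogM; apply: dhomogMn; last apply: dhomogD.
- by rewrite E2 e4; apply: dhomogMn; apply: dhomogD; apply: dhomogMn.
Qed.

Lemma Riter_lift_restrict k :
  [/\ msubst0 i1 (tnth (F k) i0) = U C ^+ (4 ^ k),
      msubst0 i1 (tnth (F k) i1) = 0 &
      msubst0 i1 (tnth (F k) i2) = W C ^+ (4 ^ k)].
Proof.
elim: k => [|k [H0 H1 H2]]; first by rewrite /= /U /V /W !msubst0Xi !expr1.
have [-> -> ->] := Riter_liftS k.
rewrite !(rmorphXn, rmorphD, rmorphM) /= H0 H1 H2 expr0n /= mul0r add0r addr0.
by split; rewrite // -!exprM expnS mulnC.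
Qed.

Lemma Riter_lift0_neq0 k : tnth (F k) i0 != 0.
Proof.
have [H0 _ _] := Riter_lift_restrict k.
apply: contra_eq_neq H0 => ->; rewrite raddf0 eq_sym.
by rewrite expf_neq0 ?mpolyXi_neq0.
Qed.

Lemma Riter_lift_coprime k : coprime_pair (tnth (F k) i0) (tnth (F k) i2).
Proof.
have [H0 _ H2] := Riter_lift_restrict k.
apply: (coprime_pair_restrictX (i := i1) _ _ _ H0 H2) => //;
  exact/msize_dhomog/Riter_lift_homog.
Qed.

Lemma lift_iter_multiple n d G : is_lift_iter n d (G : 3.-tuple P) ->
  exists q, forall j, tnth G j = q * tnth (F n) j.
Proof.
move=> [_ _ rel]; have [q [q0 q2]] := Riter_lift_coprime (rel i0 i2).
exists q => j; case: (ord3P j) => -> //.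
by apply: (mulIf (Riter_lift0_neq0 n)); rewrite rel q0 mulrAC.
Qed.

Lemma Riter_lift_reduced n : reduced (F n).
Proof.
move=> h hdvd; have [q0 e0] := hdvd i0; have [q2 e2] := hdvd i2.
have h_neq0 : h != 0.
  by apply: contraNneq (Riter_lift0_neq0 n) => h0; rewrite e0 h0 mul0r.
have /Riter_lift_coprime [r [r0 _]] : q0 * tnth (F n) i2 = q2 * tnth (F n) i0.
  by apply: (mulfI h_neq0); rewrite !mulrA -e0 -e2 mulrC.
have hr : h * r = 1.
  by apply: (mulIf (Riter_lift0_neq0 n)); rewrite mul1r -mulrA -r0 -e0.
have r_neq0 : r != 0 by apply: contra_eq_neq hr => ->; rewrite mulr0 eq_sym oner_neq0.
have := congr1 (fun p : P => msize p) hr; rewrite msizeM // msize1.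
have : msize r != 0%N by rewrite msize_poly_eq0.
case: (msize r) => // s _; rewrite addnS => /= hs.
by rewrite -[X in (_ <= X)%N]hs leq_addr.
Qed.

End AlgebraicStability.

Theorem proposition4p4 (C : numClosedFieldType) :
  forall n d : nat, deg_iter_is C n d <-> d = (4 ^ n)%N.
Proof.
move=> n d; split.
- move=> [G [liftG redG]]; have [q Gq] := lift_iter_multiple liftG.
  have /msize1_polyC qC := redG q (fun j => ex_intro _ _ (Gq j)).
  have [[j Gj_neq0] Ghomog _] := liftG.
  apply: (dhomog_uniq Gj_neq0 (Ghomog j)).
  by rewrite Gq qC mul_mpolyC dhomogZ ?Riter_lift_homog.
- move=> ->; exists (Riter_lift C n); split; last exact: Riter_lift_reduced.
  split; [by exists (@Ordinal 3 0 isT); apply: Riter_lift0_neq0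
         | exact: Riter_lift_homog | by move=> i j; rewrite mulrC].
Qed.
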